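(* A circuit $c\in\mathsf{ACirc}$ is realisable if and only if its ports can be partitioned into two sets, called inputs and outputs, such that the denotation of the corresponding rewiring of $c$ is the graph $\{(p,f(p)):p\in k(x)^{|I|}\}$ of a rational affine map $f$ from inputs to outputs.
   Context: Fix a field $k$. Circuits: terms built from generators with sorts $(n,m)$ ($n$ left, $m$ right ports): copier $\Delta:(1,2)$, discard $!:(1,0)$, amplifier $\mathsf{s}_r:(1,1)$ ($r\in k$), register $\mathsf{x}:(1,1)$, adder $+:(2,1)$, zero $0:(0,1)$, one $\mathbf{1}:(0,1)$; mirror images $\Delta^{op}:(2,1)$, $!^{op}:(0,1)$, $\mathsf{s}_r^{op}$, $\mathsf{x}^{op}:(1,1)$, $+^{op}:(1,2)$, $0^{op}:(1,0)$, $\mathbf{1}^{op}:(1,0)$; $\mathrm{id}_0$, $\mathrm{id}_1$, $\mathrm{sw}:(2,2)$; closed under sequential composition $;$ and parallel composition $\oplus$; $\mathsf{ACirc}$ is the resulting prop. Denotation: $k(x)$ is the field of polynomial fractions; $[\![\Delta]\!]=\{(p,(p,p))\}$, $[\![!]\!]=\{(p,\bullet)\}$, $[\![+]\!]=\{((p,q),p+q)\}$, $[\![0]\!]=\{(\bullet,0)\}$, $[\![\mathbf 1]\!]=\{(\bullet,1)\}$, $[\![\mathsf s_r]\!]=\{(p,rp)\}$, $[\![\mathsf x]\!]=\{(p,px)\}$; mirrored generators denote converse relations; structural generators denote identity, swap, $\{(\bullet,\bullet)\}$; $;$ is relational composition, $\oplus$ product of relations. Two circuits are equivalent if they have the same denotation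 (equivalently, are equal in the complete equational theory AIH). Feedback: for $c:(n+1,m+1)$, $\mathrm{Tr}(c):(n,m)$ is obtained by connecting the last right port of $c$ to its last left port through a register $\mathsf x$, the wire being bent with the cup $\eta=!^{op};\Delta:(0,2)$ and the cap $\epsilon=\Delta^{op};!:(2,0)$. $\mathsf{ASF}$ (affine signal flow graphs) is the smallest class of circuits containing $\Delta,!,\mathsf s_r,\mathsf x,+,0,\mathbf 1,\mathrm{id}_0,\mathrm{id}_1,\mathrm{sw}$ and closed under $;$, $\oplus$ and $\mathrm{Tr}$. Rewiring: given $c:(n,m)$ and a partition of its $n+m$ ports into inputs $I$ and outputs $O$, the rewiring of $c$ is the circuit of sort $(|I|,|O|)$ obtained by bending left ports in $O$ to the right with cups $\eta$ and right ports in $I$ to the left with caps $\epsilon$ (with symmetries to reorder); its denotation is the set of pairs (values on $I$, values on $O$) which together form an element of $[\![c]\!]$. $c$ is realisable if for some such partition its rewiring is equivalent to a circuit of $\mathsf{ASF}$. $\mathsf{Rat}\subseteq k(x)$ is the ring of fractions $p/q$ with $q$ having nonzero constant term. An affine map $f:k(x)^a\to k(x)^b$, $f(p)=Ap+b_0$, is rational if $A$ and $b_0$ have all entries in $\mathsf{Rat}$. *)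

From HB Require Import structures.
From mathcomp Require Import all_boot all_order all_algebra.
From mathcomp Require Import fraction.
Set Implicit Arguments. Unset Strict Implicit. Unset Printing Implicit Defensive.
Import Order.TTheory GRing.Theory Num.Theory.
Local Open Scope ring_scope.

(* Circuits of ACirc over a field k: generators, sequential and parallel
   composition, indexed by their sort (n,m) = (#left ports, #right ports). *)
Inductive circ (k : fieldType) : nat -> nat -> Type :=
| Copy : circ k 1 2
| Disc : circ k 1 0
| Amp (r : k) : circ k 1 1
| Reg : circ k 1 1
| Add : circ k 2 1
| Zero : circ k 0 1
| One : circ k 0 1
| CoCopy : circ k 2 1
| CoDisc : circ k 0 1
| CoAmp (r : k) : circ k 1 1
| CoReg : circ k 1 1
| CoAdd : circ k 1 2
| CoZero : circ k 1 0
| CoOne : circ k 1 0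
| Id0 : circ k 0 0
| Id1 : circ k 1 1
| Sw : circ k 2 2
| Seq n m l : circ k n m -> circ k m l -> circ k n l
| Par n1 m1 n2 m2 : circ k n1 m1 -> circ k n2 m2 -> circ k (n1 + n2) (m1 + m2).

Arguments Copy {k}. Arguments Disc {k}. Arguments Reg {k}. Arguments Add {k}.
Arguments Zero {k}. Arguments One {k}. Arguments CoCopy {k}. Arguments CoDisc {k}.
Arguments CoReg {k}. Arguments CoAdd {k}. Arguments CoZero {k}. Arguments CoOne {k}.
Arguments Id0 {k}. Arguments Id1 {k}. Arguments Sw {k}.
Arguments Seq {k n m l}. Arguments Par {k n1 m1 n2 m2}.

Notation kx k := {fraction {poly k}}.
Definition fracp (k : fieldType) (p : {poly k}) : kx k := @FracField.tofrac _ p.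

Section Semantics.
Variable k : fieldType.
Local Notation K := (kx k).

Definition kscal (r : k) : K := fracp (r%:P).
Definition xK : K := fracp 'X.

Definition copyR (a : 'rV[K]_1) (b : 'rV[K]_2) : Prop := b = const_mx (a 0 0).
Definition addR (a : 'rV[K]_2) (b : 'rV[K]_1) : Prop := b = const_mx (\sum_i a 0 i).
Definition zeroR (a : 'rV[K]_0) (b : 'rV[K]_1) : Prop := b = 0.
Definition oneR (a : 'rV[K]_0) (b : 'rV[K]_1) : Prop := b = const_mx 1.
Definition discR (a : 'rV[K]_1) (b : 'rV[K]_0) : Prop := True.
Definition ampR (r : k) (a b : 'rV[K]_1) : Prop := b = kscal r *: a.
Definition regR (a b : 'rV[K]_1) : Prop := b = xK *: a.

Fixpoint sem n m (c : circ k n m) : 'rV[K]_n -> 'rV[K]_m -> Prop :=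
  match c in circ _ n m return 'rV[K]_n -> 'rV[K]_m -> Prop with
  | Copy => copyR
  | Disc => discR
  | Amp r => ampR r
  | Reg => regR
  | Add => addR
  | Zero => zeroR
  | One => oneR
  | CoCopy => fun a b => copyR b a
  | CoDisc => fun a b => discR b a
  | CoAmp r => fun a b => ampR r b a
  | CoReg => fun a b => regR b a
  | CoAdd => fun a b => addR b a
  | CoZero => fun a b => zeroR b a
  | CoOne => fun a b => oneR b a
  | Id0 => fun _ _ => True
  | Id1 => fun a b => a = b
  | Sw => fun a b => b = \row_i a 0 (rev_ord i)
  | Seq _ _ _ c1 c2 => fun a b => exists v, sem c1 a v /\ sem c2 v b
  | Par _ _ _ _ c1 c2 => fun a b =>
      sem c1 (lsubmx a) (lsubmx b) /\ sem c2 (rsubmx a) (rsubmx b)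
  end.

Definition equiv_rel n m (R1 R2 : 'rV[K]_n -> 'rV[K]_m -> Prop) :=
  forall a b, R1 a b <-> R2 a b.

Definition castc n m n' m' (e1 : n = n') (e2 : m = m') (c : circ k n m)
  : circ k n' m' :=
  match e1 in _ = n0, e2 in _ = m0 return circ k n0 m0 with
  | erefl, erefl => c end.

Fixpoint idn (n : nat) : circ k n n :=
  match n with
  | 0 => Id0
  | n'.+1 => castc (addn1 n') (addn1 n') (Par (idn n') Id1)
  end.

Lemma sort_S1 n : (n.+1 + 1 = n + 2)%N.
Proof. by rewrite addn1 addn2. Qed.

Definition cup : circ k 0 2 := Seq CoDisc Copy.
Definition cap : circ k 2 0 := Seq CoCopy Disc.

(* Feedback: the last right port of c is connected to its last left port
   through a register x, bending the wire with cup and cap: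
     Tr(c) = (id_n (+) eta) ; (c (+) id_1) ; (id_m (+) ((x (+) id_1) ; eps)) *)
Definition Tr n m (c : circ k n.+1 m.+1) : circ k n m :=
  Seq (castc (addn0 n) (erefl (n + 2)) (Par (idn n) cup))
   (Seq (castc (sort_S1 n) (sort_S1 m) (Par c Id1))
        (castc (erefl (m + 2)) (addn0 m) (Par (idn m) (Seq (Par Reg Id1) cap)))).

Inductive ASF : forall n m, circ k n m -> Prop :=
| ASF_Copy : ASF Copy
| ASF_Disc : ASF Disc
| ASF_Amp r : ASF (Amp r)
| ASF_Reg : ASF Reg
| ASF_Add : ASF Add
| ASF_Zero : ASF Zero
| ASF_One : ASF One
| ASF_Id0 : ASF Id0
| ASF_Id1 : ASF Id1
| ASF_Sw : ASF Sw
| ASF_Seq n m l (c1 : circ k n m) (c2 : circ k m l) :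
    ASF c1 -> ASF c2 -> ASF (Seq c1 c2)
| ASF_Par n1 m1 n2 m2 (c1 : circ k n1 m1) (c2 : circ k n2 m2) :
    ASF c1 -> ASF c2 -> ASF (Par c1 c2)
| ASF_Tr n m (c : circ k n.+1 m.+1) : ASF c -> ASF (Tr c).

(* A partition is given by the set S of input ports (outputs = ~: S).
   Port values of a pair (a,b) and the vector of values on a set of ports,
   listed in increasing port order (left ports first). *)
Definition port_val n m (a : 'rV[K]_n) (b : 'rV[K]_m) (p : 'I_n + 'I_m) : K :=
  match p with inl i => a 0 i | inr j => b 0 j end.

Definition restrict n m (S : {set 'I_n + 'I_m}) (a : 'rV[K]_n) (b : 'rV[K]_m)
  : 'rV[K]_#|S| := \row_(t < #|S|) port_val a b (enum_val t).

Definition rewiring n m (c : circ k n m) (S : {set 'I_n + 'I_m})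
  (x : 'rV[K]_#|S|) (y : 'rV[K]_#|~: S|) : Prop :=
  exists a b, sem c a b /\ x = restrict S a b /\ y = restrict (~: S) a b.

Arguments rewiring {n m} c S x y.
Arguments restrict {n m} S a b.

Definition realisable n m (c : circ k n m) : Prop :=
  exists (S : {set 'I_n + 'I_m}) (d : circ k #|S| #|~: S|),
    ASF d /\ equiv_rel (sem d) (rewiring c S).

Definition is_Rat (f : K) : Prop :=
  exists p q : {poly k}, q.[0] != 0 /\ f = fracp p / fracp q.

Definition rational_affine a b (f : 'rV[K]_a -> 'rV[K]_b) : Prop :=
  exists (A : 'M[K]_(a, b)) (b0 : 'rV[K]_b),
    (forall i j, is_Rat (A i j)) /\ (forall j, is_Rat (b0 0 j)) /\
    forall p, f p = p *m A + b0.

Definition is_graph_of a b (R : 'rV[K]_a -> 'rV[K]_b -> Prop)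
  (f : 'rV[K]_a -> 'rV[K]_b) : Prop :=
  forall p q, R p q <-> q = f p.

End Semantics.

Arguments rewiring {k n m} c S x y.
Arguments restrict {k n m} S a b.
Arguments rational_affine {k a b} f.
Arguments is_graph_of {k a b} R f.
Arguments realisable {k n m} c.

(* Generators denote affine maps with
   polynomial coefficients, and composition and juxtaposition preserve
   rational affine maps.  For feedback, if [c] maps [(p, t)] to [(q, w)] with
   [w = P p + a t + b], the loop [t = x w] has the unique solution
   [w = (P p + b) / (1 - x a)]; for [a] in [Rat], [1 - x a] is a unit of
   [Rat], so the new coefficients are in [Rat] again.
   Completeness: multiplication by a polynomial is Horner's scheme; for
   [q = c + x Q] with [c <> 0], [1/q = c^-1 / (1 - x P)] with [P = - c^-1 Q],
   realised by a feedback loop around multiplication by [P]; an affine map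
   with such coefficients is then assembled column by column from copiers and
   adders. *)

From mathcomp Require Import all_boot all_order all_algebra.
From mathcomp Require Import fraction.
From mathcomp Require Import ring zify.

Set Implicit Arguments. Unset Strict Implicit. Unset Printing Implicit Defensive.
Import Order.TTheory GRing.Theory Num.Theory.
Local Open Scope ring_scope.

Local Notation wid := (widen_ord (leqnSn _)).

Section RatFractions.
Variable k : fieldType.
Local Notation K := (kx k).

Lemma fracp_neq0 (q : {poly k}) : q.[0] != 0 -> fracp q != 0.
Proof. by apply: contra; rewrite /fracp tofrac_eq0 => /eqP ->; rewrite horner0. Qed.

Lemma is_Rat_fracp (p : {poly k}) : is_Rat (fracp p).
Proof.
exists p, 1; split; first by rewrite hornerC oner_neq0.
by rewrite /fracp tofrac1 divr1.
Qed.

Lemma is_Rat0 : is_Rat (0 : K).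
Proof. by have := is_Rat_fracp 0; rewrite /fracp tofrac0. Qed.

Lemma is_Rat1 : is_Rat (1 : K).
Proof. by have := is_Rat_fracp 1; rewrite /fracp tofrac1. Qed.

Lemma is_RatD (a b : K) : is_Rat a -> is_Rat b -> is_Rat (a + b).
Proof.
move=> [p1 [q1 [h1 ->]]] [p2 [q2 [h2 ->]]].
exists (p1 * q2 + p2 * q1), (q1 * q2); split; first by rewrite hornerM mulf_neq0.
have n1 := fracp_neq0 h1; have n2 := fracp_neq0 h2.
by rewrite (addf_div _ _ n1 n2) /fracp tofracD !tofracM.
Qed.

Lemma is_RatM (a b : K) : is_Rat a -> is_Rat b -> is_Rat (a * b).
Proof.
move=> [p1 [q1 [h1 ->]]] [p2 [q2 [h2 ->]]].
exists (p1 * p2), (q1 * q2); split; first by rewrite hornerM mulf_neq0.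
by rewrite mulf_div /fracp !tofracM.
Qed.

Lemma is_Rat_sum I (r : seq I) (P : pred I) (F : I -> K) :
  (forall i, P i -> is_Rat (F i)) -> is_Rat (\sum_(i <- r | P i) F i).
Proof. by move=> h; apply: big_ind => //; [exact: is_Rat0 | exact: is_RatD]. Qed.

(* [1 - x (p/q) = (q - x p)/q], and [q - x p] has constant term [q(0)]. *)
Lemma is_Rat_feedback (a : K) :
  is_Rat a -> 1 - xK k * a != 0 /\ is_Rat (xK k / (1 - xK k * a)).
Proof.
move=> [p [q [hq ->]]].
have hr : (q - 'X * p).[0] != 0.
  by rewrite hornerD hornerN hornerM hornerX mul0r subr0.
have nq := fracp_neq0 hq; have nr := fracp_neq0 hr.
have -> : 1 - xK k * (fracp p / fracp q) = fracp (q - 'X * p) / fracp q.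
  by rewrite -{1}(divff nq) mulrA -mulrBl /xK /fracp tofracB tofracM.
split; first exact: mulf_neq0 nr (invr_neq0 nq).
exists ('X * q), (q - 'X * p); split=> //.
by rewrite invf_div mulrA /xK /fracp tofracM.
Qed.

End RatFractions.

Section RationalAffine.
Variable k : fieldType.
Local Notation K := (kx k).

Definition rat_mx a b (A : 'M[K]_(a, b)) := forall i j, is_Rat (A i j).

Lemma rat_mx_const a b (c : K) : is_Rat c -> rat_mx (const_mx c : 'M_(a, b)).
Proof. by move=> hc i j; rewrite mxE. Qed.

Lemma rat_mx0 a b : rat_mx (0 : 'M[K]_(a, b)).
Proof. by move=> i j; rewrite mxE; exact: is_Rat0. Qed.

Lemma rat_mx_scalar a (c : K) : is_Rat c -> rat_mx (c%:M : 'M_a).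
Proof. by move=> hc i j; rewrite mxE; case: eqP => _; [exact: hc | exact: is_Rat0]. Qed.

Lemma rat_mxD a b (A B : 'M[K]_(a, b)) : rat_mx A -> rat_mx B -> rat_mx (A + B).
Proof. by move=> hA hB i j; rewrite mxE; exact: is_RatD. Qed.

Lemma rat_mxM a b l (A : 'M[K]_(a, b)) (B : 'M_(b, l)) :
  rat_mx A -> rat_mx B -> rat_mx (A *m B).
Proof. by move=> hA hB i j; rewrite mxE; apply: is_Rat_sum => t _; exact: is_RatM. Qed.

Lemma rat_mx_row a b1 b2 (A1 : 'M[K]_(a, b1)) (A2 : 'M_(a, b2)) :
  rat_mx A1 -> rat_mx A2 -> rat_mx (row_mx A1 A2).
Proof. by move=> h1 h2 i j; case: (split_ordP j) => j' ->; rewrite ?row_mxEl ?row_mxEr. Qed.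

Lemma rat_mx_col a1 a2 b (A1 : 'M[K]_(a1, b)) (A2 : 'M_(a2, b)) :
  rat_mx A1 -> rat_mx A2 -> rat_mx (col_mx A1 A2).
Proof. by move=> h1 h2 i j; case: (split_ordP i) => i' ->; rewrite ?col_mxEu ?col_mxEd. Qed.

Lemma rational_affineP a b (f : 'rV[K]_a -> 'rV[K]_b) :
  rational_affine f <->
  exists A b0, [/\ rat_mx A, rat_mx b0 & forall p, f p = p *m A + b0].
Proof.
split=> [[A [b0 [hA [hb hf]]]] | [A [b0 [hA hb hf]]]]; exists A, b0.
  by split=> // i j; rewrite [i]ord1.
by do !split.
Qed.

Lemma rational_affine_ext a b (f g : 'rV[K]_a -> 'rV[K]_b) :
  rational_affine f -> f =1 g -> rational_affine g.
Proof.
move=> /rational_affineP [A [b0 [hA hb hf]]] fg.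
by apply/rational_affineP; exists A, b0; split=> // p; rewrite -fg.
Qed.

Lemma rational_affine_linear a b (A : 'M[K]_(a, b)) :
  rat_mx A -> rational_affine (mulmx^~ A).
Proof.
move=> hA; apply/rational_affineP; exists A, 0.
by split=> // [|p]; [exact: rat_mx0 | rewrite addr0].
Qed.

Lemma rational_affine_const a b (v : 'rV[K]_b) :
  rat_mx v -> rational_affine (fun _ : 'rV_a => v).
Proof.
move=> hv; apply/rational_affineP; exists 0, v.
by split=> // [|p]; [exact: rat_mx0 | rewrite mulmx0 add0r].
Qed.

Lemma rational_affine_comp a b l (f : 'rV[K]_a -> 'rV_b) (g : 'rV_b -> 'rV_l) :
  rational_affine f -> rational_affine g -> rational_affine (fun p => g (f p)).
Proof.
move=> /rational_affineP [A1 [b1 [hA1 hb1 hf]]] /rational_affineP [A2 [b2 [hA2 hb2 hg]]].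
apply/rational_affineP; exists (A1 *m A2), (b1 *m A2 + b2); split.
- exact: rat_mxM.
- by apply: rat_mxD => //; exact: rat_mxM.
by move=> p; rewrite hg hf mulmxDl mulmxA addrA.
Qed.

Lemma rational_affine_par a1 b1 a2 b2 (f : 'rV[K]_a1 -> 'rV_b1) (g : 'rV_a2 -> 'rV_b2) :
  rational_affine f -> rational_affine g ->
  rational_affine (fun p => row_mx (f (lsubmx p)) (g (rsubmx p))).
Proof.
move=> /rational_affineP [A1 [c1 [hA1 hc1 hf]]] /rational_affineP [A2 [c2 [hA2 hc2 hg]]].
apply/rational_affineP; exists (block_mx A1 0 0 A2), (row_mx c1 c2); split.
- by apply: rat_mx_col; apply: rat_mx_row => //; exact: rat_mx0.
- exact: rat_mx_row.
move=> p; rewrite hf hg -{3}[p]hsubmxK mul_row_block !mulmx0 addr0 add0r.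
by rewrite add_row_mx.
Qed.

End RationalAffine.

Section Wiring.
Variable k : fieldType.
Local Notation K := (kx k).

(* Entries of a row addressed by a natural number, [0] out of range: equations
   between cast, split and concatenated rows then reduce to index arithmetic,
   which [lia] decides. *)
Definition rget N (r : 'rV[K]_N) (i : nat) : K :=
  if insub i is Some j then r 0 j else 0.

Definition mkrow N (f : nat -> K) : 'rV[K]_N := \row_(i < N) f i.

Lemma rgetE N (r : 'rV[K]_N) (i : 'I_N) : rget r i = r 0 i.
Proof. by rewrite /rget valK. Qed.

Lemma rget_ord0 N (r : 'rV[K]_N.+1) : rget r 0 = r 0 0.
Proof. exact: (rgetE r ord0). Qed.

Lemma rget_ge N (r : 'rV[K]_N) i : (N <= i)%N -> rget r i = 0.
Proof. by move=> h; rewrite /rget insubF // ltnNge h. Qed.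

Lemma rget_inj N (r s : 'rV[K]_N) :
  (forall i, (i < N)%N -> rget r i = rget s i) -> r = s.
Proof. by move=> h; apply/rowP => j; rewrite -!rgetE h. Qed.

Lemma rget_entry N (F : 'I_N -> K) i :
  rget (\row_j F j) i = if insub i is Some j then F j else 0.
Proof. by rewrite /rget; case: insub => // j; rewrite mxE. Qed.

Lemma rget_mkrow N f i : rget (mkrow N f) i = if (i < N)%N then f i else 0.
Proof. by rewrite rget_entry; case: insubP => [j -> <-|/negbTE ->]. Qed.

Lemma rget_castmx N N' (e : (1 = 1)%N * (N = N')) (r : 'rV[K]_N) i :
  rget (castmx e r) i = rget r i.
Proof.
case: e => e1 e2; case: N' / e2; rewrite (eq_irrelevance e1 erefl).
by rewrite castmx_id.
Qed.

Lemma rget_row_mx n1 n2 (u : 'rV[K]_n1) (v : 'rV[K]_n2) i :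
  rget (row_mx u v) i = if (i < n1)%N then rget u i else rget v (i - n1).
Proof.
rewrite {1}/rget; case: insubP => [j _ <-|hi]; last first.
  by case: ifP => _; rewrite rget_ge //; lia.
case: (split_ordP j) => j' -> /=; rewrite ?row_mxEl ?row_mxEr.
  by rewrite rgetE.
by rewrite addKn rgetE.
Qed.

Lemma rget_lsub n1 n2 (r : 'rV[K]_(n1 + n2)) i :
  rget (lsubmx r) i = if (i < n1)%N then rget r i else 0.
Proof.
case: ifP => hi; last by rewrite rget_ge // leqNgt hi.
by rewrite -(hsubmxK r) rget_row_mx hi row_mxKl.
Qed.

Lemma rget_rsub n1 n2 (r : 'rV[K]_(n1 + n2)) i : rget (rsubmx r) i = rget r (n1 + i).
Proof. by rewrite -(hsubmxK r) rget_row_mx ltnNge leq_addr /= addKn row_mxKr. Qed.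

Lemma rget_add N (u v : 'rV[K]_N) i : rget (u + v) i = rget u i + rget v i.
Proof. by rewrite /rget; case: insub => [j|]; rewrite ?mxE ?addr0. Qed.

Lemma rget_scale N c (u : 'rV[K]_N) i : rget (c *: u) i = c * rget u i.
Proof. by rewrite /rget; case: insub => [j|]; rewrite ?mxE ?mulr0. Qed.

Lemma rget_const N c i : rget (const_mx c : 'rV[K]_N) i = if (i < N)%N then c else 0.
Proof. by rewrite /rget; case: insubP => [j -> _|/negbTE ->]; rewrite ?mxE. Qed.

Lemma rget_rev N (a : 'rV[K]_N) i :
  rget (\row_j a 0 (rev_ord j)) i = if (i < N)%N then rget a (N.-1 - i) else 0.
Proof.
rewrite rget_entry; case: insubP => [j -> <-|/negbTE -> //].
by rewrite -rgetE /=; congr rget; lia.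
Qed.

Lemma rget_mulmx_col a (u : 'rV[K]_a) (g : 'cV_a) : rget (u *m g) 0 = \sum_i u 0 i * g i 0.
Proof. by rewrite rget_ord0 mxE. Qed.

Lemma sum_rV2 (r : 'rV[K]_2) : \sum_(i < 2) r 0 i = rget r 0 + rget r 1.
Proof. by rewrite big_ord_recr big_ord1 -!rgetE. Qed.

Lemma rV0_eq (u v : 'rV[K]_0) : u = v.
Proof. by rewrite (thinmx0 u) (thinmx0 v). Qed.

End Wiring.

(* The sorts of [Par] add with the ring addition of [nat], which [rewrite]
   does not match against [addn]: hence the instance at [1 + 1]. *)
Ltac rget_simpl := rewrite ?(rget_castmx, rget_lsub, rget_rsub, rget_mkrow,
  rget_row_mx, @rget_row_mx _ 1 1, rget_add, rget_scale, rget_const, rget_rev,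
  rget_mulmx_col, sum_rV2) /=.
Ltac index_cases := repeat (case: ifP => ?); try (by exfalso; lia); rewrite ?mxE.

Section Graphs.
Variable k : fieldType.
Local Notation K := (kx k).

Lemma graph_ext a b (R : 'rV[K]_a -> 'rV[K]_b -> Prop) f g :
  is_graph_of R f -> f =1 g -> is_graph_of R g.
Proof. by move=> hf fg p q; rewrite hf fg. Qed.

Lemma sem_castc n m n' m' (e1 : n = n') (e2 : m = m') (c : circ k n m) a b :
  sem (castc e1 e2 c) a b <->
  sem c (castmx (erefl 1%N, esym e1) a) (castmx (erefl 1%N, esym e2) b).
Proof. by move: a b; case: n' / e1; case: m' / e2 => a b; rewrite !castmx_id. Qed.

Lemma graph_castc n m n' m' (e1 : n = n') (e2 : m = m') (c : circ k n m) f :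
  is_graph_of (sem c) f ->
  is_graph_of (sem (castc e1 e2 c))
    (fun a => castmx (erefl 1%N, e2) (f (castmx (erefl 1%N, esym e1) a))).
Proof. by case: n' / e1; case: m' / e2 => h a b; rewrite /= h !castmx_id. Qed.

Lemma graph_Seq n m l (c1 : circ k n m) (c2 : circ k m l) f1 f2 :
  is_graph_of (sem c1) f1 -> is_graph_of (sem c2) f2 ->
  is_graph_of (sem (Seq c1 c2)) (fun a => f2 (f1 a)).
Proof.
move=> h1 h2 a b /=; split=> [[v [/h1 -> /h2 ->]] //|->].
by exists (f1 a); rewrite h1 h2.
Qed.

Lemma graph_Par n1 m1 n2 m2 (c1 : circ k n1 m1) (c2 : circ k n2 m2) f1 f2 :
  is_graph_of (sem c1) f1 -> is_graph_of (sem c2) f2 ->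
  is_graph_of (sem (Par c1 c2)) (fun a => row_mx (f1 (lsubmx a)) (f2 (rsubmx a))).
Proof.
move=> h1 h2 a b /=; rewrite h1 h2; split=> [[<- <-]|->].
  by rewrite hsubmxK.
by rewrite row_mxKl row_mxKr.
Qed.

Lemma graph_idn n : is_graph_of (sem (idn k n)) id.
Proof.
elim: n => [|n IH] a b /=; first by split=> // _; exact: rV0_eq.
rewrite sem_castc /= !IH; split=> [[e1 e2]|->] //.
apply: (can_inj (castmxKV (erefl 1%N) (addn1 n))).
by rewrite -[castmx _ b]hsubmxK -[castmx _ a]hsubmxK e1 e2.
Qed.

Lemma graph_Copy : is_graph_of (sem (@Copy k)) (fun a => const_mx (a 0 0)).
Proof. by []. Qed.

Lemma graph_Disc : is_graph_of (sem (@Disc k)) (fun _ => 0).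
Proof. by move=> a b; split=> // _; exact: rV0_eq. Qed.

Lemma graph_Amp r : is_graph_of (sem (@Amp k r)) (fun a => kscal r *: a).
Proof. by []. Qed.

Lemma graph_Reg : is_graph_of (sem (@Reg k)) (fun a => xK k *: a).
Proof. by []. Qed.

Lemma graph_Add : is_graph_of (sem (@Add k)) (fun a => const_mx (\sum_i a 0 i)).
Proof. by []. Qed.

Lemma graph_Zero : is_graph_of (sem (@Zero k)) (fun _ => 0).
Proof. by []. Qed.

Lemma graph_One : is_graph_of (sem (@One k)) (fun _ => const_mx 1).
Proof. by []. Qed.

Lemma graph_Id0 : is_graph_of (sem (@Id0 k)) (fun _ => 0).
Proof. by move=> a b; split=> // _; exact: rV0_eq. Qed.

Lemma graph_Id1 : is_graph_of (sem (@Id1 k)) id.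
Proof. by move=> a b; split=> ->. Qed.

Lemma graph_Sw : is_graph_of (sem (@Sw k)) (fun a => \row_i a 0 (rev_ord i)).
Proof. by []. Qed.

End Graphs.

Section Feedback.
Variable k : fieldType.
Local Notation K := (kx k).

Definition rcons_row n (p : 'rV[K]_n) (t : K) : 'rV[K]_n.+1 :=
  mkrow n.+1 (fun i => if (i < n)%N then rget p i else t).

Lemma sem_Tr_cup n (p : 'rV[K]_n) a :
  sem (castc (addn0 n) (erefl (n + 2)%N) (Par (idn k n) (cup k))) p a <->
  exists t, a = mkrow (n + 2) (fun i => if (i < n)%N then rget p i else t).
Proof.
rewrite sem_castc /=; split.
  move=> [/graph_idn hl [v [_ hr]]]; exists (v 0 0); apply: rget_inj => i hi.
  move: (congr1 (fun r => rget r i) hl) (congr1 (fun r => rget r (i - n)%N) hr); rget_simpl.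
  rewrite hi; case: ifP => [_ -> //|hin _].
  by rewrite subnKC; [move=> ->; rewrite ifT //; lia | lia].
move=> [t ->]; split.
  by apply/graph_idn; apply: rget_inj => i hi; rget_simpl; index_cases.
exists (const_mx t); split=> //.
by rewrite /copyR; apply: rget_inj => i hi; rget_simpl; index_cases.
Qed.

Lemma sem_Tr_cap m (q : 'rV[K]_m) a :
  sem (castc (erefl (m + 2)%N) (addn0 m) (Par (idn k m) (Seq (Par Reg Id1) (cap k)))) a q <->
  exists w, a = mkrow (m + 2)
    (fun i => if (i < m)%N then rget q i else if i == m then w else xK k * w).
Proof.
rewrite sem_castc /=; split.
  move=> [/graph_idn hl [v [[hreg hid] [u [hcopy _]]]]]; exists (rget a m).
  have hq i : (i < m)%N -> rget a i = rget q i.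
    by move=> hi; move: (congr1 (fun r => rget r i) hl); rget_simpl; rewrite hi.
  have hlast : rget a m.+1 = xK k * rget a m.
    move: (congr1 (fun r => rget r 0) hid) (congr1 (fun r => rget r 0) hreg).
    move: (congr1 (fun r => rget r 0) hcopy) (congr1 (fun r => rget r 1) hcopy).
    by rget_simpl; rewrite !addn0 addn1 => h0 h1 -> <-; rewrite h1 -h0.
  apply: rget_inj => i hi; rewrite rget_mkrow hi.
  case: ifP => [/hq //|him]; case: eqP => [-> //|him'].
  by have -> : i = m.+1 by lia.
move=> [w ->]; split.
  by apply/graph_idn; apply: rget_inj => i hi; rget_simpl; index_cases.
exists (const_mx (xK k * w)); split.
  by split; [rewrite /regR|]; apply: rget_inj => i hi; rget_simpl; index_cases.
exists (const_mx (xK k * w)); split=> //.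
by rewrite /copyR; apply: rget_inj => i hi; rget_simpl; index_cases.
Qed.

Lemma sem_Tr_body n m (c : circ k n.+1 m.+1) p t q w :
  sem (castc (sort_S1 n) (sort_S1 m) (Par c Id1))
    (mkrow (n + 2) (fun i => if (i < n)%N then rget p i else t))
    (mkrow (m + 2)
      (fun i => if (i < m)%N then rget q i else if i == m then w else xK k * w)) <->
  sem c (rcons_row p t) (rcons_row q w) /\ t = xK k * w.
Proof.
rewrite sem_castc /=.
set a1 := lsubmx _; set a2 := lsubmx _; set b1 := rsubmx _; set b2 := rsubmx _.
have -> : a1 = rcons_row p t by apply: rget_inj => i hi; rget_simpl; index_cases.
have -> : a2 = rcons_row q w by apply: rget_inj => i hi; rget_simpl; index_cases.
have -> : b1 = const_mx t by apply: rget_inj => i hi; rget_simpl; index_cases.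
have -> : b2 = const_mx (xK k * w) by apply: rget_inj => i hi; rget_simpl; index_cases.
split=> [[hc /(congr1 (fun r : 'rV[K]_1 => r 0 0))]|[hc <-]]; last by split.
by rewrite !mxE.
Qed.

Lemma sem_Tr n m (c : circ k n.+1 m.+1) p q :
  sem (Tr c) p q <->
  exists t w, sem c (rcons_row p t) (rcons_row q w) /\ t = xK k * w.
Proof.
split=> [[a1 [/sem_Tr_cup [t ->] [a2 [hc /sem_Tr_cap [w ha2]]]]]|[t [w hc]]].
  by exists t, w; apply/sem_Tr_body; rewrite -ha2.
exists (mkrow (n + 2) (fun i => if (i < n)%N then rget p i else t)).
split; first by apply/sem_Tr_cup; exists t.
exists (mkrow (m + 2)
  (fun i => if (i < m)%N then rget q i else if i == m then w else xK k * w)).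
by split; [apply/sem_Tr_body | apply/sem_Tr_cap; exists w].
Qed.

End Feedback.

Lemma feedback_solve (F : fieldType) (x a : F) : 1 - x * a != 0 ->
  forall s b w, w = s + x * w * a + b <-> w = (s + b) / (1 - x * a).
Proof.
move=> hd s b w; have -> : (w = s + x * w * a + b) <-> (w * (1 - x * a) = s + b).
  by split=> h; [rewrite mulrBr mulr1 {1}h; ring | rewrite addrAC -h; ring].
by split=> [<-|->]; rewrite ?mulfK ?divfK.
Qed.

Section Soundness.
Variable k : fieldType.
Local Notation K := (kx k).

Lemma rcons_row_widen n (p : 'rV[K]_n) t i : rcons_row p t 0 (wid i) = p 0 i.
Proof. by rewrite -rgetE rget_mkrow /= ltnS ltnW // ltn_ord rgetE. Qed.

Lemma rcons_row_max n (p : 'rV[K]_n) t : rcons_row p t 0 ord_max = t.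
Proof. by rewrite -rgetE rget_mkrow /= ltnSn ltnn. Qed.

Lemma rcons_rowP n (q : 'rV[K]_n) w r :
  rcons_row q w = r <-> (forall j, q 0 j = r 0 (wid j)) /\ w = r 0 ord_max.
Proof.
split=> [<-|[hq hw]]; first by split=> [j|]; rewrite ?rcons_row_widen ?rcons_row_max.
apply/rowP => j; case: (unliftP ord_max j) => [j'|] ->.
  rewrite (_ : lift _ _ = wid j') ?rcons_row_widen ?hq //.
  by apply: val_inj; exact: lift_max.
by rewrite rcons_row_max.
Qed.

Lemma mulmx_rcons_row n m (p : 'rV[K]_n) t (A : 'M_(n.+1, m)) j :
  (rcons_row p t *m A) 0 j = \sum_i p 0 i * A (wid i) j + t * A ord_max j.
Proof.
rewrite mxE big_ord_recr /= rcons_row_max; congr (_ + _).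
by apply: eq_bigr => i _; rewrite rcons_row_widen.
Qed.

Lemma rational_Tr n m (c : circ k n.+1 m.+1) :
  (exists f, rational_affine f /\ is_graph_of (sem c) f) ->
  exists f, rational_affine f /\ is_graph_of (sem (Tr c)) f.
Proof.
move=> [f [/rational_affineP [A [b0 [hA hb hf]]] gc]].
have [hd he] := is_Rat_feedback (hA ord_max ord_max).
set d := 1 - xK k * _ in hd he; set e := xK k / d in he.
pose A' := \matrix_(i, j) (A (wid i) (wid j) + e * A (wid i) ord_max * A ord_max (wid j)).
pose b' := \row_j (b0 0 (wid j) + e * b0 0 ord_max * A ord_max (wid j)).
exists (fun p => p *m A' + b'); split.
  apply/rational_affineP; exists A', b'; split=> // i j; rewrite mxE;
    by repeat first [exact: he | exact: hA | exact: hb | apply: is_RatD | apply: is_RatM].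
move=> p q; rewrite sem_Tr.
set P := \sum_i p 0 i * A (wid i) ord_max.
have outE j : (p *m A' + b') 0 j = \sum_i p 0 i * A (wid i) (wid j)
    + e * (P + b0 0 ord_max) * A ord_max (wid j) + b0 0 (wid j).
  rewrite !mxE (eq_bigr (fun i => p 0 i * A (wid i) (wid j)
    + e * A ord_max (wid j) * (p 0 i * A (wid i) ord_max))) => [|i _]; last first.
    by rewrite mxE; ring.
  by rewrite big_split /= -mulr_sumr -/P; ring.
split=> [[t [w [/gc]]]|->].
  rewrite hf => /rcons_rowP [hq hw] ht; apply/rowP => j; rewrite outE hq.
  move: hw; rewrite mxE mulmx_rcons_row -/P ht => /(feedback_solve hd) hw.
  by rewrite mxE mulmx_rcons_row hw /e; ring.
pose w := (P + b0 0 ord_max) / d; exists (xK k * w), w; split=> //.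
apply/gc; rewrite hf; apply/rcons_rowP; split=> [j|].
  by rewrite outE mxE mulmx_rcons_row /w /e; ring.
by rewrite mxE mulmx_rcons_row -/P; apply/feedback_solve.
Qed.

Lemma rational_affine_scale n (c : K) :
  is_Rat c -> rational_affine (fun a : 'rV[K]_n => c *: a).
Proof.
move=> hc; have hcM := rat_mx_scalar (a := n) hc.
apply: rational_affine_ext (rational_affine_linear hcM) _.
by move=> a; rewrite /= mul_mx_scalar.
Qed.

Lemma rational_affine_id n : rational_affine (@id 'rV[K]_n).
Proof.
have h1 := rat_mx_scalar (a := n) (is_Rat1 k).
apply: rational_affine_ext (rational_affine_linear h1) _.
by move=> a; rewrite /= mulmx1.
Qed.

Lemma rational_affine_sum a :
  rational_affine (fun p : 'rV[K]_a => const_mx (\sum_i p 0 i) : 'rV_1).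
Proof.
have h1 := rat_mx_const (a := a) (b := 1) (is_Rat1 k).
apply: rational_affine_ext (rational_affine_linear h1) _.
by move=> p; apply/rowP => j; rewrite !mxE; apply: eq_bigr => i _; rewrite mxE mulr1.
Qed.

Lemma ASF_rational n m (c : circ k n m) :
  ASF c -> exists f, rational_affine f /\ is_graph_of (sem c) f.
Proof.
have const0 a b : rational_affine (fun _ : 'rV[K]_a => 0 : 'rV_b).
  by apply: rational_affine_const; exact: rat_mx0.
elim=> {n m c}.
- exists (fun a => const_mx (a 0 0)); split; last exact: graph_Copy.
  have h1 := rat_mx_const (a := 1) (b := 2) (is_Rat1 k).
  apply: rational_affine_ext (rational_affine_linear h1) _.
  by move=> a; apply/rowP => j; rewrite !mxE big_ord1 !mxE mulr1.
- by exists (fun _ => 0); split; [exact: const0 | exact: graph_Disc].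
- move=> r; exists (fun a => kscal r *: a); split; last exact: graph_Amp.
  by apply: rational_affine_scale; exact: is_Rat_fracp.
- exists (fun a => xK k *: a); split; last exact: graph_Reg.
  by apply: rational_affine_scale; exact: is_Rat_fracp.
- exists (fun a => const_mx (\sum_i a 0 i)).
  by split; [exact: rational_affine_sum | exact: graph_Add].
- by exists (fun _ => 0); split; [exact: const0 | exact: graph_Zero].
- exists (fun _ => const_mx 1); split; last exact: graph_One.
  by apply: rational_affine_const; exact: rat_mx_const (is_Rat1 k).
- by exists (fun _ => 0); split; [exact: const0 | exact: graph_Id0].
- by exists id; split; [exact: rational_affine_id | exact: graph_Id1].
- exists (fun a => \row_i a 0 (rev_ord i)); split; last exact: graph_Sw.
  pose S : 'M[K]_2 := \matrix_(i, j) (i == rev_ord j)%:R.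
  apply: rational_affine_ext (rational_affine_linear (A := S) _) _.
    by move=> i j; rewrite mxE; case: eqP => _; [exact: is_Rat1 | exact: is_Rat0].
  move=> a; apply/rowP => j; rewrite !mxE (bigD1 (rev_ord j)) //= mxE eqxx mulr1.
  by rewrite big1 ?addr0 // => i /negbTE hi; rewrite mxE hi mulr0.
- move=> n m l c1 c2 _ [f1 [r1 g1]] _ [f2 [r2 g2]].
  by exists (fun a => f2 (f1 a)); split; [exact: rational_affine_comp | exact: graph_Seq].
- move=> n1 m1 n2 m2 c1 c2 _ [f1 [r1 g1]] _ [f2 [r2 g2]].
  exists (fun a => row_mx (f1 (lsubmx a)) (f2 (rsubmx a))).
  by split; [exact: rational_affine_par | exact: graph_Par].
by move=> n m c _; exact: rational_Tr.
Qed.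

End Soundness.

Section Completeness.
Variable k : fieldType.
Local Notation K := (kx k).

Definition ASF_graph n m (f : 'rV[K]_n -> 'rV[K]_m) :=
  exists d : circ k n m, ASF d /\ is_graph_of (sem d) f.

Lemma ASF_graph_ext n m (f g : 'rV[K]_n -> 'rV_m) : ASF_graph f -> f =1 g -> ASF_graph g.
Proof. by move=> [d [hd gd]] fg; exists d; split=> //; exact: graph_ext fg. Qed.

Lemma ASF_graph_comp n m l (f : 'rV[K]_n -> 'rV_m) (g : 'rV_m -> 'rV_l) :
  ASF_graph f -> ASF_graph g -> ASF_graph (fun p => g (f p)).
Proof.
move=> [d1 [h1 g1]] [d2 [h2 g2]]; exists (Seq d1 d2).
by split; [exact: ASF_Seq | exact: graph_Seq].
Qed.

Lemma ASF_graph_par n1 m1 n2 m2 (f : 'rV[K]_n1 -> 'rV_m1) (g : 'rV_n2 -> 'rV_m2) :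
  ASF_graph f -> ASF_graph g -> ASF_graph (fun p => row_mx (f (lsubmx p)) (g (rsubmx p))).
Proof.
move=> [d1 [h1 g1]] [d2 [h2 g2]]; exists (Par d1 d2).
by split; [exact: ASF_Par | exact: graph_Par].
Qed.

Lemma ASF_castc n m n' m' (e1 : n = n') (e2 : m = m') (c : circ k n m) :
  ASF c -> ASF (castc e1 e2 c).
Proof. by case: n' / e1; case: m' / e2. Qed.

Lemma ASF_graph_cast n m n' m' (e1 : n = n') (e2 : m = m') (f : 'rV[K]_n -> 'rV_m) :
  ASF_graph f ->
  ASF_graph (fun a => castmx (erefl 1%N, e2) (f (castmx (erefl 1%N, esym e1) a))).
Proof.
move=> [d [hd gd]]; exists (castc e1 e2 d).
by split; [exact: ASF_castc | exact: graph_castc].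
Qed.

Lemma ASF_graph_id n : ASF_graph (@id 'rV[K]_n).
Proof.
exists (idn k n); split; last exact: graph_idn.
elim: n => [|n IH]; first exact: ASF_Id0.
by apply: ASF_castc; apply: ASF_Par => //; exact: ASF_Id1.
Qed.

Lemma ASF_graph_feedback n m (g : 'rV[K]_n.+1 -> 'rV_m.+1) (f : 'rV_n -> 'rV_m) :
  ASF_graph g ->
  (forall p q, (exists t w, rcons_row q w = g (rcons_row p t) /\ t = xK k * w) <-> q = f p) ->
  ASF_graph f.
Proof.
move=> [d [hd gd]] hf; exists (Tr d); split; first exact: ASF_Tr.
move=> p q; rewrite sem_Tr -hf.
by split=> -[t [w [h ht]]]; exists t, w; split=> //; apply/gd.
Qed.

Lemma ASF_graph_Copy : ASF_graph (fun a : 'rV[K]_1 => const_mx (a 0 0) : 'rV_2).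
Proof. by exists Copy; split; [exact: ASF_Copy | exact: graph_Copy]. Qed.

Lemma ASF_graph_Disc : ASF_graph (fun _ : 'rV[K]_1 => 0 : 'rV_0).
Proof. by exists Disc; split; [exact: ASF_Disc | exact: graph_Disc]. Qed.

Lemma ASF_graph_Amp r : ASF_graph (fun a : 'rV[K]_1 => kscal r *: a).
Proof. by exists (Amp r); split; [exact: ASF_Amp | exact: graph_Amp]. Qed.

Lemma ASF_graph_Reg : ASF_graph (fun a : 'rV[K]_1 => xK k *: a).
Proof. by exists Reg; split; [exact: ASF_Reg | exact: graph_Reg]. Qed.

Lemma ASF_graph_Add : ASF_graph (fun a : 'rV[K]_2 => const_mx (\sum_i a 0 i) : 'rV_1).
Proof. by exists Add; split; [exact: ASF_Add | exact: graph_Add]. Qed.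

Lemma ASF_graph_One : ASF_graph (fun _ : 'rV[K]_0 => const_mx 1 : 'rV_1).
Proof. by exists One; split; [exact: ASF_One | exact: graph_One]. Qed.

Lemma ASF_graph_Sw : ASF_graph (fun a : 'rV[K]_2 => \row_i a 0 (rev_ord i)).
Proof. by exists Sw; split; [exact: ASF_Sw | exact: graph_Sw]. Qed.

Lemma ASF_graph_poly (p : {poly k}) : ASF_graph (fun a : 'rV[K]_1 => fracp p *: a).
Proof.
elim/poly_ind: p => [|p c IH].
  by apply: ASF_graph_ext (ASF_graph_Amp 0) _ => a; rewrite /kscal polyC0.
have := ASF_graph_comp ASF_graph_Copy (ASF_graph_comp
  (ASF_graph_par (ASF_graph_comp IH ASF_graph_Reg) (ASF_graph_Amp c)) ASF_graph_Add).
move/ASF_graph_ext; apply=> a; apply: rget_inj => i hi; rget_simpl.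
have -> : i = 0%N by lia.
by rewrite rget_ord0 /xK /kscal /fracp tofracD tofracM; ring.
Qed.

Lemma ASF_graph_feedback_poly (P : {poly k}) :
  ASF_graph (fun a : 'rV[K]_1 => (1 - xK k * fracp P)^-1 *: a).
Proof.
have [hd _] := is_Rat_feedback (is_Rat_fracp P).
apply: ASF_graph_feedback (ASF_graph_comp ASF_graph_Add
  (ASF_graph_comp ASF_graph_Copy (ASF_graph_par (ASF_graph_id 1) (ASF_graph_poly P)))) _.
move=> p q; split.
  move=> [t [w [e ht]]]; subst t.
  move: (congr1 (fun r => rget r 0) e) (congr1 (fun r => rget r 1) e); rget_simpl.
  rewrite !mxE => hq hw.
  have : rget q 0 = rget p 0 + xK k * rget q 0 * fracp P + 0.
    by rewrite {1}hq hw -hq; ring.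
  move/(feedback_solve hd); rewrite addr0 => h0.
  by apply/rowP => j; rewrite [j]ord1 mxE -!rget_ord0 h0 mulrC.
move=> ->; pose y := (1 - xK k * fracp P)^-1 * rget p 0.
have hy : y = rget p 0 + xK k * y * fracp P + 0.
  by apply/(feedback_solve hd); rewrite addr0 mulrC.
exists (xK k * (fracp P * y)), (fracp P * y); split=> //.
have yE : rget p 0 + xK k * (fracp P * y) = y by rewrite {2}hy; ring.
apply: rget_inj => i hi; rget_simpl; index_cases; rewrite yE //.
by have -> : i = 0%N by lia.
Qed.

Lemma ASF_graph_inv (q : {poly k}) :
  q.[0] != 0 -> ASF_graph (fun a : 'rV[K]_1 => (fracp q)^-1 *: a).
Proof.
elim/poly_ind: q => [|Q c _] hq; first by rewrite horner0 eqxx in hq.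
have hc : c != 0 by move: hq; rewrite hornerD hornerMX hornerC mulr0 add0r.
pose P := - c^-1%:P * Q.
have cV : c%:P * c^-1%:P = 1 :> {poly k} by rewrite -polyCM mulfV.
have qE : Q * 'X + c%:P = c%:P * (1 - 'X * P).
  transitivity (c%:P + 'X * Q * (c%:P * c^-1%:P)); last by rewrite /P; ring.
  by rewrite cV mulr1 addrC mulrC.
have kV : (fracp c%:P)^-1 = kscal c^-1 by apply: mulr1_eq; rewrite /fracp -tofracM cV tofrac1.
apply: ASF_graph_ext (ASF_graph_comp (ASF_graph_feedback_poly P) (ASF_graph_Amp c^-1)) _.
move=> a; rewrite /= scalerA qE /fracp [tofrac (_ * (1 - _))]tofracM tofracB tofrac1.
by rewrite [tofrac ('X * _)]tofracM invfM kV.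
Qed.

Lemma ASF_graph_Rat (r : K) : is_Rat r -> ASF_graph (fun a : 'rV[K]_1 => r *: a).
Proof.
move=> [p [q [hq ->]]].
apply: ASF_graph_ext (ASF_graph_comp (ASF_graph_poly p) (ASF_graph_inv hq)) _.
by move=> a; rewrite /= scalerA mulrC.
Qed.

Lemma ASF_graph_discard a : ASF_graph (fun _ : 'rV[K]_a => 0 : 'rV_0).
Proof.
elim: a => [|a IH].
  by exists Id0; split; [exact: ASF_Id0 | exact: graph_Id0].
apply: ASF_graph_ext (ASF_graph_cast (addn1 a) (erefl 0%N) (ASF_graph_par IH ASF_graph_Disc)) _.
by move=> p; exact: rV0_eq.
Qed.

Lemma ASF_graph_rotate a : ASF_graph (fun u : 'rV[K]_(a + 1) =>
  mkrow (1 + a) (fun i => if i == 0%N then rget u a else rget u i.-1)).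
Proof.
elim: a => [|a IH].
  apply: ASF_graph_ext (ASF_graph_id 1) _ => u.
  by apply: rget_inj => i hi; rget_simpl; have -> : i = 0%N by lia.
have := ASF_graph_comp (ASF_graph_cast (esym (addSn a 1)) (erefl (1 + (1 + a))%N)
  (ASF_graph_par (ASF_graph_id 1) IH)) (ASF_graph_par ASF_graph_Sw (ASF_graph_id a)).
move/ASF_graph_ext; apply=> u; apply: rget_inj => i hi; rget_simpl; index_cases.
all: by congr rget; lia.
Qed.

Lemma ASF_graph_duplicate a : ASF_graph (fun p : 'rV[K]_a => row_mx p p).
Proof.
elim: a => [|a IH].
  by apply: ASF_graph_ext (ASF_graph_discard 0) _ => p; exact: rV0_eq.
have e1 : (a + a + 2 = a + (a + 1 + 1))%N by lia.
have e2 : (a + (1 + a + 1) = a.+1 + a.+1)%N by lia.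
have := ASF_graph_comp (ASF_graph_cast (addn1 a) e1 (ASF_graph_par IH ASF_graph_Copy))
  (ASF_graph_cast (erefl (a + (a + 1 + 1))%N) e2
     (ASF_graph_par (ASF_graph_id a) (ASF_graph_par (ASF_graph_rotate a) (ASF_graph_id 1)))).
move/ASF_graph_ext; apply=> p; apply: rget_inj => i hi.
rget_simpl; rewrite -?rget_ord0; rget_simpl; index_cases.
all: by congr rget; lia.
Qed.

Lemma ASF_graph_dot a (g : 'cV[K]_a) (c : K) :
  rat_mx g -> is_Rat c -> ASF_graph (fun p => p *m g + const_mx c).
Proof.
move=> + hc; elim: a g => [|a IH] g hg.
  apply: ASF_graph_ext (ASF_graph_comp ASF_graph_One (ASF_graph_Rat hc)) _ => p.
  by apply/rowP => j; rewrite !mxE big_ord0 add0r mulr1.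
pose g' := \col_(i < a) g (wid i) 0.
have hg' : rat_mx g' by move=> i j; rewrite mxE.
have := ASF_graph_cast (addn1 a) (erefl 1%N) (ASF_graph_comp
  (ASF_graph_par (IH g' hg') (ASF_graph_Rat (hg ord_max 0))) ASF_graph_Add).
move/ASF_graph_ext; apply=> p; apply/rowP => j; rewrite [j]ord1 castmx_id.
rewrite !mxE sum_rV2; rget_simpl; rewrite big_ord_recr /= subnn addn0.
rewrite (eq_bigr (fun i => p 0 (wid i) * g (wid i) 0)).
  by rewrite -(rgetE p ord_max); ring.
by move=> i _; rewrite -!rgetE; rget_simpl; rewrite /g' mxE ltn_ord.
Qed.

Lemma ASF_graph_affine a b (A : 'M[K]_(a, b)) (b0 : 'rV_b) :
  rat_mx A -> rat_mx b0 -> ASF_graph (fun p => p *m A + b0).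
Proof.
elim: b A b0 => [|b IH] A b0 hA hb.
  by apply: ASF_graph_ext (ASF_graph_discard a) _ => p; exact: rV0_eq.
pose A' := \matrix_(i < a, j < b) A i (wid j).
pose b' := \row_(j < b) b0 0 (wid j).
have hA' : rat_mx A' by move=> i j; rewrite mxE.
have hb' : rat_mx b' by move=> i j; rewrite mxE.
have hcol : rat_mx (col ord_max A) by move=> i j; rewrite mxE.
have := ASF_graph_comp (ASF_graph_duplicate a) (ASF_graph_cast (erefl (a + a)%N) (addn1 b)
  (ASF_graph_par (IH A' b' hA' hb') (ASF_graph_dot hcol (hb 0 ord_max)))).
move/ASF_graph_ext; apply=> p; apply/rowP => j.
rewrite castmxE /= cast_ord_id row_mxKl row_mxKr.
case: (unliftP ord_max j) => [j'|] ->.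
  rewrite (_ : cast_ord _ _ = lshift 1 j'); last by apply: val_inj; exact: lift_max.
  rewrite row_mxEl !mxE (_ : lift _ _ = wid j'); last by apply: val_inj; exact: lift_max.
  by congr (_ + _); apply: eq_bigr => i _; rewrite /A' mxE.
rewrite (_ : cast_ord _ _ = rshift b 0); last by apply: val_inj; rewrite /= addn0.
by rewrite row_mxEr !mxE; congr (_ + _); apply: eq_bigr => i _; rewrite mxE.
Qed.

Lemma rational_affine_ASF a b (f : 'rV[K]_a -> 'rV[K]_b) : rational_affine f -> ASF_graph f.
Proof.
move=> /rational_affineP [A [b0 [hA hb hf]]].
by apply: ASF_graph_ext (ASF_graph_affine hA hb) _ => p; rewrite hf.
Qed.

End Completeness.

Theorem theorem5 (k : fieldType) (n m : nat) (c : circ k n m) :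
  realisable c <->
  exists (S : {set 'I_n + 'I_m}) (f : 'rV[kx k]_#|S| -> 'rV[kx k]_#|~: S|),
    rational_affine f /\ is_graph_of (rewiring c S) f.
Proof.
split=> [[S [d [hd hdc]]]|[S [f [hf hfc]]]].
  have [f [hf gd]] := ASF_rational hd.
  by exists S, f; split=> // p q; rewrite -hdc gd.
have [d [hd gd]] := rational_affine_ASF hf.
by exists S, d; split=> // p q; rewrite gd hfc.
Qed.
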